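(* Let $\mathbb{X}$ be a reflexive Banach space and $\mathbb{Y}$ any Banach space. Let $T\in\mathbb{L}(\mathbb{X},\mathbb{Y})$ with $\|T\|=1$, suppose $\mathbb{K}(\mathbb{X},\mathbb{Y})$ is an $M$-ideal of $\mathbb{L}(\mathbb{X},\mathbb{Y})$ and $\operatorname{dist}(T,\mathbb{K}(\mathbb{X},\mathbb{Y}))<1$. Suppose $\{x_1,\dots,x_r\}$ is a maximal linearly independent subset of $M_T\cap\operatorname{Ext}(B_{\mathbb{X}})$ and that $Tx_i$ is $m_i$-smooth for $1\le i\le r$. Then $\dim\operatorname{span}J(T)\ge\sum_{i=1}^r m_i$.
   Context: $\mathbb{L}(\mathbb{X},\mathbb{Y})$ (resp. $\mathbb{K}(\mathbb{X},\mathbb{Y})$): bounded (resp. compact) linear operators with operator norm. $M$-ideal: a closed subspace $\mathbb{V}$ of $\mathbb{Z}$ with $\mathbb{Z}^*=\mathbb{V}^*\oplus_1\mathbb{V}^\perp$ (unique decomposition $z^*=z_1^*+z_2^*$, $z_2^*\in\mathbb{V}^\perp$, $\|z^*\|=\|z_1^*\|+\|z_2^*\|$). $B_{\mathbb{X}}$ is the closed unit ball, $\operatorname{Ext}(C)$ the extreme points of a convex set $C$, $M_T=\{x:\|x\|=1,\|Tx\|=\|T\|\}$. For a unit vector $z$ of a Banach space $\mathbb{Z}$, $J(z)=\{f\in\mathbb{Z}^*:\|f\|=1,f(z)=1\}$, and $z$ is $k$-smooth if $\dim\operatorname{span}J(z)=k$ (this applies also to $T$ as a unit vector of $\mathbb{L}(\mathbb{X},\mathbb{Y})$).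 *)

From HB Require Import structures.
From mathcomp Require Import all_boot all_order all_algebra.
From mathcomp Require Import all_classical all_reals all_analysis.
Set Implicit Arguments. Unset Strict Implicit. Unset Printing Implicit Defensive.
Import Order.TTheory GRing.Theory Num.Theory.
Import numFieldNormedType.Exports.
Local Open Scope classical_set_scope.
Local Open Scope ring_scope.

Section LinAlg.
Context {R : realType} {W : lmodType R}.

Definition bs_lin_indep (n : nat) (x : 'I_n -> W) : Prop :=
  forall c : 'I_n -> R, \sum_(i < n) c i *: x i = 0 -> forall i, c i = 0.

Definition bs_span (S : set W) : set W :=
  [set w | exists n (c : 'I_n -> R) (x : 'I_n -> W),
      (forall i, S (x i)) /\ w = \sum_(i < n) c i *: x i].

Definition bs_dim_span_ge (S : set W) (k : nat) : Prop :=
  exists x : 'I_k -> W, (forall i, bs_span S (x i)) /\ bs_lin_indep x.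

Definition bs_dim_span_eq (S : set W) (k : nat) : Prop :=
  bs_dim_span_ge S k /\ ~ bs_dim_span_ge S k.+1.

Definition bs_ext (C : set W) : set W :=
  [set z | C z /\ forall a b (t : R), C a -> C b -> 0 < t < 1 ->
                  z = t *: a + (1 - t) *: b -> a = b].

Definition bs_subspace (S : set W) : Prop :=
  S 0 /\ forall (a : R) u v, S u -> S v -> S (a *: u + v).

Definition bs_extend (n : nat) (x : 'I_n -> W) (y : W) : 'I_n.+1 -> W :=
  fun i => match unlift ord_max i with Some j => x j | None => y end.
End LinAlg.

(* A normed space presented as a linear bs_subspace D of an lmodType V,
   equipped with the norm N (only its values on D matter). *)
Section NormedSub.
Context {R : realType} {V : lmodType R}.
Variables (D : set V) (N : V -> R).

(* continuous linear functionals on (D, N); normalized to vanish off D so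
   that functionals are determined by their values on D *)
Definition bs_dual_set : set (V -> R) :=
  [set f | (forall (a : R) u v, D u -> D v -> f (a *: u + v) = a * f u + f v)
        /\ (exists M : R, forall v, D v -> `|f v| <= M * N v)
        /\ (forall v, ~ D v -> f v = 0)].

Definition bs_dual_norm (f : V -> R) : R :=
  sup [set r : R | exists v, [/\ D v, N v <= 1 & r = `|f v|]].

Definition bs_Jset (z : V) : set (V -> R) :=
  [set f | bs_dual_set f /\ bs_dual_norm f = 1 /\ f z = 1].

Definition bs_k_smooth (z : V) (k : nat) : Prop :=
  D z /\ N z = 1 /\ bs_dim_span_eq (bs_Jset z) k.

Definition bs_dist_to (z : V) (S : set V) : R :=
  inf [set r : R | exists v, S v /\ r = N (z - v)].

(* M-ideal: S is a closed bs_subspace of (D,N), and the dual splits as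
   Z^* = W (+)_1 S^perp for some bs_subspace W of Z^* *)
Definition bs_M_ideal (S : set V) : Prop :=
  [/\ bs_subspace S, S `<=` D,
      (forall z, D z -> (forall e : R, 0 < e -> exists v, S v /\ N (z - v) < e) -> S z)
    & let perp := [set f | bs_dual_set f /\ forall v, S v -> f v = 0] in
      exists Wd : set (V -> R),
       [/\ bs_subspace Wd, Wd `<=` bs_dual_set,
           (forall f, bs_dual_set f -> exists w p, [/\ Wd w, perp p & f = w + p]),
           (forall f, Wd f -> perp f -> f = 0)
         & (forall w p, Wd w -> perp p -> bs_dual_norm (w + p) = bs_dual_norm w + bs_dual_norm p)]].
End NormedSub.

Definition bs_closed_unit_ball {R : realType} (Z : normedModType R) : set Z :=
  [set z : Z | `|z| <= 1].
Arguments bs_closed_unit_ball {R} Z.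

Section Operators.
Context {R : realType} {X Y : normedModType R}.


Definition bs_Lop : set (X -> Y) :=
  [set T | (forall (a : R) u v, T (a *: u + v) = a *: T u + T v)
        /\ exists M : R, forall x, `|T x| <= M * `|x|].

Definition bs_opnorm (T : X -> Y) : R :=
  sup [set r : R | exists x : X, `|x| <= 1 /\ r = `|T x|].

Definition bs_Kop : set (X -> Y) :=
  [set T | bs_Lop T /\ compact (closure (T @` bs_closed_unit_ball X))].

Definition bs_MT (T : X -> Y) : set X := [set x | `|x| = 1 /\ `|T x| = bs_opnorm T].
End Operators.

(* reflexivity: the canonical embedding X -> X** is onto *)
Definition bs_reflexive {R : realType} (X : normedModType R) : Prop :=
  forall Phi : (X -> R) -> R,
    bs_dual_set (bs_dual_set [set: X] (fun v : X => `|v|)) (bs_dual_norm [set: X] (fun v : X => `|v|)) Phi ->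
    exists x : X, forall f, bs_dual_set [set: X] (fun v : X => `|v|) f -> Phi f = f x.

From HB Require Import structures.
From mathcomp Require Import all_boot all_order all_algebra.
From mathcomp Require Import all_classical all_reals all_analysis.
From mathcomp Require Import lra.
Import Order.TTheory GRing.Theory Num.Theory.
Import numFieldNormedType.Exports.
Local Open Scope classical_set_scope.
Local Open Scope ring_scope.

Set Implicit Arguments.
Unset Strict Implicit.

(* Each x_i in M_T turns a support functional h of T x_i into the support
   functional S |-> h (S x_i) of T.  These images stay linearly independent
   across i: testing a vanishing combination sum_ij c_ij h_ij(S x_i) on the
   rank-one operators u |-> phi(u) y gives phi (sum_i G_i(y) x_i) = 0 with
   G_i = sum_j c_ij h_ij, for every functional phi of norm at most one.  By
   Hahn-Banach sum_i G_i(y) x_i = 0, so every G_i vanishes by independence of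
   the x_i, and then every c_ij does by independence of the h_ij. *)

Section HahnBanach.
Variables (R : realType) (X : normedModType R).
Implicit Types (G : set (X * R)) (x y z w : X) (a b c t : R).

(* Partial functionals are encoded by their graphs, so that the union of a
   chain of them is again one. *)
Definition dominated_graph G : Prop :=
  [/\ G (0, 0), (forall x a b, G (x, a) -> G (x, b) -> a = b),
      (forall x y a b t, G (x, a) -> G (y, b) -> G (t *: x + y, t * a + b))
    & (forall x a, G (x, a) -> a <= `|x|)].

Lemma dominated_graph_scale G x a t :
  dominated_graph G -> G (x, a) -> G (t *: x, t * a).
Proof. by case=> G0 _ Glin _ Gxa; have := Glin _ _ _ _ t Gxa G0; rewrite !addr0. Qed.

Lemma dominated_graph_gap z G x a y b : dominated_graph G ->
  G (x, a) -> G (y, b) -> a - `|x - z| <= `|y + z| - b.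
Proof.
case=> _ _ Glin Gdom Gxa Gyb.
have := Gdom _ _ (Glin _ _ _ _ 1 Gxa Gyb); rewrite scale1r mul1r.
have := ler_normD (x - z) (y + z); rewrite addrACA addNr addr0.
lra.
Qed.

Lemma dominated_graph_sandwich G z : dominated_graph G -> exists c,
  (forall x a, G (x, a) -> a - `|x - z| <= c) /\
  (forall y b, G (y, b) -> c <= `|y + z| - b).
Proof.
move=> domG; have [G0 _ _ _] := domG.
pose E := [set r | exists x a, G (x, a) /\ r = a - `|x - z|].
have Eub y b : G (y, b) -> ubound E (`|y + z| - b).
  by move=> Gyb _ [x [a [Gxa ->]]]; exact (dominated_graph_gap z domG Gxa Gyb).
have E0 : E !=set0 by exists (0 - `|0 - z|), 0, 0.
have supE : has_sup E by split => //; exists (`|0 + z| - 0); exact: Eub G0.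
exists (sup E); split=> [x a Gxa|y b Gyb].
  by apply: sup_upper_bound => //; exists x, a.
by apply: ge_sup => //; exact: Eub.
Qed.

Definition graph_adjoin G z c : set (X * R) :=
  [set p | exists x a t, G (x, a) /\ p = (x + t *: z, a + t * c)].

Lemma sub_graph_adjoin G z c : G `<=` graph_adjoin G z c.
Proof. by move=> [x a] Gxa; exists x, a, 0; rewrite scale0r mul0r !addr0. Qed.

Lemma graph_adjoin_point G z c : G (0, 0) -> graph_adjoin G z c (z, c).
Proof. by exists 0, 0, 1; rewrite scale1r mul1r !add0r. Qed.

Lemma graph_adjoin_functional G z c : dominated_graph G -> (forall a, ~ G (z, a)) ->
  forall w a b, graph_adjoin G z c (w, a) -> graph_adjoin G z c (w, b) -> a = b.
Proof.
move=> domG zG w _ _ [x1 [a1 [t1 [G1 [Ew ->]]]]] [x2 [a2 [t2 [G2 [Ew2 ->]]]]].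
have {Ew Ew2} e : x1 + t1 *: z = x2 + t2 *: z by rewrite -Ew -Ew2.
have [et|t12] := eqVneq t1 t2.
  have ex : x1 = x2 by apply: (addIr (t1 *: z)); rewrite e et.
  case: domG => _ Gfun _ _; rewrite ex in G1.
  by rewrite et (Gfun _ _ _ G1 G2).
(* otherwise z itself would lie in the domain of G *)
exfalso; apply: (zG ((t1 - t2)^-1 * (-1 * a1 + a2))).
have -> : z = (t1 - t2)^-1 *: (-1 *: x1 + x2).
  have -> : -1 *: x1 + x2 = (t1 - t2) *: z.
    by rewrite scaleN1r scalerBl -[x2](addrK (t2 *: z)) -e addrA addKr.
  by rewrite scalerA mulVf ?scale1r // subr_eq0.
by apply: dominated_graph_scale => //; case: domG => _ _ Glin _; exact: Glin.
Qed.

Lemma graph_adjoin_lin G z c : dominated_graph G ->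
  forall w1 w2 a b t, graph_adjoin G z c (w1, a) -> graph_adjoin G z c (w2, b) ->
  graph_adjoin G z c (t *: w1 + w2, t * a + b).
Proof.
case=> _ _ Glin _ _ _ _ _ t [x1 [a1 [t1 [G1 [-> ->]]]]] [x2 [a2 [t2 [G2 [-> ->]]]]].
exists (t *: x1 + x2), (t * a1 + a2), (t * t1 + t2); split; first exact: Glin.
congr (_, _); first by rewrite scalerDr scalerA scalerDl addrACA.
by rewrite mulrDr mulrA mulrDl addrACA.
Qed.

Lemma graph_adjoin_le_norm G z c : dominated_graph G ->
  (forall x a, G (x, a) -> a - `|x - z| <= c) ->
  (forall y b, G (y, b) -> c <= `|y + z| - b) ->
  forall w a, graph_adjoin G z c (w, a) -> a <= `|w|.
Proof.
move=> domG cge cle _ _ [x [a [t [Gxa [-> ->]]]]].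
have [t0|t0|->] := ltgtP t 0; last first.
- by rewrite scale0r mul0r !addr0; case: domG => _ _ _; apply.
- have := cle _ _ (dominated_graph_scale t^-1 domG Gxa).
  have -> : x + t *: z = t *: (t^-1 *: x + z).
    by rewrite scalerDr scalerA mulfV ?gt_eqF // scale1r.
  rewrite normrZ gtr0_norm // -(ler_pM2l t0) mulrBr mulrA mulfV ?gt_eqF // mul1r.
  lra.
- have s0 : 0 < - t by rewrite oppr_gt0.
  have := cge _ _ (dominated_graph_scale (- t)^-1 domG Gxa).
  have -> : x + t *: z = - t *: ((- t)^-1 *: x - z).
    by rewrite scalerBr scalerA mulfV ?gt_eqF // scale1r scaleNr opprK.
  rewrite normrZ (gtr0_norm s0) -(ler_pM2l s0) mulrBr mulrA mulfV ?gt_eqF // mul1r.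
  lra.
Qed.

Lemma graph_adjoin_dominated G z : dominated_graph G -> (forall a, ~ G (z, a)) ->
  exists c, dominated_graph (graph_adjoin G z c).
Proof.
move=> domG zG; have [c [cge cle]] := dominated_graph_sandwich z domG.
exists c; split.
- by apply: sub_graph_adjoin; case: domG.
- exact: graph_adjoin_functional.
- exact: graph_adjoin_lin.
- exact: graph_adjoin_le_norm.
Qed.

Lemma dominated_graph_chain_union B : dominated_graph B ->
  forall F : set (set (X * R)), F `<=` (fun S => dominated_graph (B `|` S)) ->
  total_on F subset -> dominated_graph (B `|` \bigcup_(S in F) S).
Proof.
move=> domB F domF chainF.
set U := B `|` _.
have two p q : U p -> U q -> exists2 S, dominated_graph S & [/\ S p, S q & S `<=` U].
  have subU S : F S -> B `|` S `<=` U by move=> FS w [Bw|Sw]; [left|right; exists S].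
  move=> [Bp|[S1 FS1 S1p]] [Bq|[S2 FS2 S2q]].
  - by exists B => //; split => // w; left.
  - by exists (B `|` S2); [exact: domF|split; [left|right|exact: subU]].
  - by exists (B `|` S1); [exact: domF|split; [right|left|exact: subU]].
  - have [S12|S21] := chainF _ _ FS1 FS2.
      by exists (B `|` S2); [exact: domF|split; [right; exact: S12|right|exact: subU]].
    by exists (B `|` S1); [exact: domF|split; [right|right; exact: S21|exact: subU]].
split.
- by left; case: domB.
- move=> x a b Ua Ub; have [S [_ Sfun _ _] [Sa Sb _]] := two _ _ Ua Ub.
  exact: Sfun Sa Sb.
- move=> x y a b t Ua Ub; have [S [_ _ Slin _] [Sa Sb SU]] := two _ _ Ua Ub.
  exact/SU/(Slin _ _ _ _ _ Sa Sb).
- move=> x a Ua; have [S [_ _ _ Sdom] [Sa _ _]] := two _ _ Ua Ua.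
  exact: Sdom Sa.
Qed.

Lemma dominated_graph_total_extension B : dominated_graph B ->
  exists2 G, dominated_graph G & B `<=` G /\ forall z, exists a, G (z, a).
Proof.
move=> domB.
have [A [domBA maxA]] := Zorn_bigcup (dominated_graph_chain_union domB).
exists (B `|` A) => //; split=> [p Bp|z]; first by left.
apply: contrapT => noz.
have zBA a : ~ (B `|` A) (z, a) by move=> BAz; apply: noz; exists a.
have [c domc] := graph_adjoin_dominated domBA zBA.
have BAc := @sub_graph_adjoin (B `|` A) z c.
apply: (maxA (graph_adjoin (B `|` A) z c)).
  split=> [p Ap|Ac]; first by apply: BAc; right.
  by apply: (zBA c); right; apply/Ac/graph_adjoin_point; case: domBA.
rewrite (_ : B `|` _ = graph_adjoin (B `|` A) z c) //.
by apply/setUidPr => p Bp; apply: BAc; left.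
Qed.

Lemma total_dominated_graph_scalar G : dominated_graph G -> (forall z, exists a, G (z, a)) ->
  exists phi : X -> R,
    [/\ scalar phi, forall u, `|phi u| <= `|u| & forall z a, G (z, a) -> phi z = a].
Proof.
move=> domG Gtot; have [_ Gfun Glin Gdom] := domG.
pose phi z := projT1 (cid (Gtot z)).
have Gphi z : G (z, phi z) by rewrite /phi; case: cid.
exists phi; split=> [t u w|u|z a Gza]; last exact: Gfun (Gphi z) Gza.
  exact: Gfun (Gphi _) (Glin _ _ _ _ t (Gphi u) (Gphi w)).
rewrite ler_norml Gdom ?andbT //.
have := Gdom _ _ (Gphi (-1 *: u)).
rewrite (Gfun _ _ _ (Gphi _) (dominated_graph_scale (-1) domG (Gphi u))).
by rewrite normrZ normrN1 mul1r mulN1r lerNl.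
Qed.

Theorem hahn_banach_norming v : v != 0 -> exists phi : X -> R,
  [/\ scalar phi, forall u, `|phi u| <= `|u| & phi v = `|v|].
Proof.
move=> v0.
pose L := [set p : X * R | exists t, p = (t *: v, t * `|v|)].
have domL : dominated_graph L.
  split.
  - by exists 0; rewrite scale0r mul0r.
  - move=> _ _ _ [t1 [-> ->]] [t2 [e ->]].
    have /eqP : (t1 - t2) *: v = 0 by rewrite scalerBl e subrr.
    by rewrite scaler_eq0 (negbTE v0) orbF subr_eq0 => /eqP ->.
  - move=> _ _ _ _ t [t1 [-> ->]] [t2 [-> ->]].
    by exists (t * t1 + t2); rewrite scalerDl scalerA mulrDl mulrA.
  - by move=> _ _ [t [-> ->]]; rewrite normrZ ler_wpM2r ?ler_norm.
have [G domG [LG Gtot]] := dominated_graph_total_extension domL.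
have [phi [phil phib phiG]] := total_dominated_graph_scalar domG Gtot.
by exists phi; split=> //; apply/phiG/LG; exists 1; rewrite scale1r mul1r.
Qed.

End HahnBanach.

Lemma card_tagged_ord r (m : 'I_r -> nat) :
  #|{: {i : 'I_r & 'I_(m i)}}| = (\sum_(i < r) m i)%N.
Proof.
by rewrite card_tagged sumnE big_map big_enum; apply: eq_bigr => i _; rewrite card_ord.
Qed.

Section LinearFunctions.
Variables (R : realType) (U W : lmodType R).

Section Linear.
Variables (f : U -> W) (flin : linear f).
Let fL : {linear U -> W} := HB.pack f (GRing.isLinear.Build R U W *:%R f flin).
Lemma linear_funZ a u : f (a *: u) = a *: f u. Proof. exact: (linearZ_LR fL). Qed.
End Linear.

Section Scalar.
Variables (f : U -> R) (fscalar : scalar f).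
Let fL : {scalar U} := HB.pack f (GRing.isLinear.Build R U R^o *%R f fscalar).
Lemma scalar_fun0 : f 0 = 0. Proof. exact: (linear0 fL). Qed.
Lemma scalar_funZ a u : f (a *: u) = a * f u. Proof. exact: (linearZ_LR fL). Qed.
Lemma scalar_fun_sum n (c : 'I_n -> R) (z : 'I_n -> U) :
  f (\sum_(i < n) c i *: z i) = \sum_(i < n) c i * f (z i).
Proof.
by elim/big_rec2: _ => [|i y1 y2 _ <-]; [exact: scalar_fun0 | exact: fscalar].
Qed.
End Scalar.

Lemma bs_span_scalar (S : set (U -> R)) g :
  (forall f, S f -> scalar f) -> bs_span S g -> scalar g.
Proof.
move=> Sscalar [n [c [h [Sh ->]]]] a u v.
rewrite !fct_sumE mulr_sumr -big_split; apply: eq_bigr => i _ /=.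
change (c i * h i (a *: u + v) = a * (c i * h i u) + c i * h i v).
by rewrite Sscalar // mulrDr mulrCA.
Qed.

Lemma bs_dim_span_ge_fintype (K : finType) (S : set W) (u : K -> W) :
  (forall k, bs_span S (u k)) ->
  (forall c : K -> R, \sum_k c k *: u k = 0 -> forall k, c k = 0) ->
  bs_dim_span_ge S #|K|.
Proof.
move=> Su uind; exists (u \o enum_val); split=> [k|c csum k]; first exact: Su.
have := uind (c \o enum_rank) _ (enum_val k); rewrite /= enum_valK; apply.
rewrite (reindex (fun j : 'I_#|K| => enum_val j)) /=; last exact/onW_bij/enum_val_bij.
by rewrite -[RHS]csum; apply: eq_bigr => j _; rewrite enum_valK.
Qed.

End LinearFunctions.

Lemma sup_unit_ball_bound (R : realType) (Z W : normedModType R) (f : Z -> W) M :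
  (forall (a : R) u, `|f (a *: u)| = `|a| * `|f u|) -> (forall z, `|f z| <= M * `|z|) ->
  forall z, `|f z| <= sup [set r | exists u, `|u| <= 1 /\ r = `|f u|] * `|z|.
Proof.
move=> fhomo fM z.
set E := [set r | _].
have supE : has_sup E.
  split; first by exists `|f 0|, 0; rewrite normr0 ler01.
  exists `|M| => _ [u [u1 ->]]; apply: (le_trans (fM u)).
  by rewrite (le_trans (ler_wpM2r _ (ler_norm M))) ?ler_piMr.
have [->|z0] := eqVneq z 0.
  by have := fhomo 0 0; rewrite scale0r normr0 mul0r => ->; rewrite normr0 mulr0.
have nz : 0 < `|z| by rewrite normr_gt0.
have Ez : E `|f (`|z|^-1 *: z)| by exists (`|z|^-1 *: z); rewrite normfZV.
have := sup_upper_bound supE Ez.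
by rewrite fhomo normfV normr_id ler_pdivrMl // mulrC.
Qed.

Section Operators.
Variables (R : realType) (X Y : normedModType R).
Local Notation normY := (fun v : Y => `|v|).

Lemma bs_opnorm_bound (S : X -> Y) x : bs_Lop S -> `|S x| <= bs_opnorm S * `|x|.
Proof.
move=> [Slin [M SM]]; apply: (sup_unit_ball_bound _ SM) => a u.
by rewrite linear_funZ // normrZ.
Qed.

Lemma bs_dual_norm_bound (h : Y -> R) y :
  bs_dual_set [set: Y] normY h -> `|h y| <= bs_dual_norm [set: Y] normY h * `|y|.
Proof.
move=> [hlin [[M hM] _]].
have hscalar : scalar h by move=> a u v; exact: hlin.
rewrite /bs_dual_norm (_ : [set r | _] = [set r | exists u, `|u| <= 1 /\ r = `|h u|]).
  apply: (sup_unit_ball_bound (W := R) _ (fun v => hM v I)) => a u.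
  by rewrite scalar_funZ // normrM.
by apply/seteqP; split=> r [u]; [case=> _ u1 ->|case=> u1 ->]; exists u.
Qed.

Lemma bs_Lop_lincomb (S S' : X -> Y) (a : R) :
  bs_Lop S -> bs_Lop S' -> bs_Lop (a *: S + S').
Proof.
move=> [Slin [M SM]] [S'lin [M' S'M]]; split=> [b u v|].
  change (a *: S (b *: u + v) + S' (b *: u + v) =
    b *: (a *: S u + S' u) + (a *: S v + S' v)).
  by rewrite Slin S'lin !scalerDr !scalerA mulrC -!scalerA addrACA -scalerDr.
exists (`|a| * M + M') => u.
change (`|a *: S u + S' u| <= (`|a| * M + M') * `|u|).
rewrite (le_trans (ler_normD _ _)) // normrZ mulrDl -mulrA.
by rewrite lerD // ler_wpM2l.
Qed.

Definition rank_one (phi : X -> R) (y : Y) : X -> Y := fun u => phi u *: y.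

Lemma bs_Lop_rank_one phi y : scalar phi -> (forall u, `|phi u| <= `|u|) ->
  bs_Lop (rank_one phi y).
Proof.
move=> philin phib; split=> [a u v|]; first by rewrite /rank_one philin scalerDl scalerA.
by exists `|y| => u; rewrite /rank_one normrZ mulrC ler_wpM2l.
Qed.

(* Vanishing outside L(X,Y) is the normalisation that bs_dual_set demands. *)
Definition eval_at (x : X) (g : Y -> R) : (X -> Y) -> R :=
  fun S => if `[< bs_Lop S >] then g (S x) else 0.

Lemma eval_at_rank_one x g phi y : scalar g -> scalar phi ->
  (forall u, `|phi u| <= `|u|) -> eval_at x g (rank_one phi y) = phi x * g y.
Proof.
move=> gscalar philin phib.
by rewrite /eval_at asboolT ?scalar_funZ //; exact: bs_Lop_rank_one.
Qed.

Lemma eval_at_Jset (T : X -> Y) x h : bs_Lop T -> bs_opnorm T = 1 -> `|x| = 1 ->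
  bs_Jset [set: Y] normY (T x) h -> bs_Jset bs_Lop bs_opnorm T (eval_at x h).
Proof.
move=> TL Tn xn [hdual [hn hTx]].
have hlin := hdual.1.
have evalT : eval_at x h T = 1 by rewrite /eval_at asboolT.
have eval_le S : bs_Lop S -> `|eval_at x h S| <= bs_opnorm S.
  move=> SL; rewrite /eval_at asboolT //.
  rewrite (le_trans (bs_dual_norm_bound _ hdual)) // hn mul1r.
  by rewrite -[leRHS]mulr1 -xn bs_opnorm_bound.
split; [split; [|split]|split] => //.
- move=> a S S' SL S'L; rewrite /eval_at !asboolT //; first exact: hlin.
  exact: bs_Lop_lincomb.
- by exists 1 => S SL; rewrite mul1r eval_le.
- by move=> S SL; rewrite /eval_at asboolF.
- rewrite /bs_dual_norm; set E := [set r | _].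
  have E1 : E 1 by exists T; rewrite Tn evalT normr1.
  have Eub : ubound E 1 by move=> _ [S [SL S1 ->]]; exact: le_trans (eval_le _ SL) S1.
  by apply/le_anti; rewrite ge_sup ?sup_upper_bound //; [split|]; exists 1.
Qed.

Lemma eval_at_span x (S : set (Y -> R)) (S' : set ((X -> Y) -> R)) g :
  (forall h, S h -> S' (eval_at x h)) -> bs_span S g -> bs_span S' (eval_at x g).
Proof.
move=> SS' [n [c [h [Sh ->]]]].
exists n, c, (fun k => eval_at x (h k)); split=> [k|]; first exact/SS'/Sh.
apply/funext => S0; rewrite /eval_at !fct_sumE.
case: (pselect (bs_Lop S0)) => S0L.
  rewrite asboolT //; apply: eq_bigr => i _.
  by rewrite /GRing.scale /= asboolT.
rewrite asboolF //; apply/esym/big1 => i _.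
by rewrite /GRing.scale /= asboolF // scaler0.
Qed.

Lemma eval_at_indep r (x : 'I_r -> X) (m : 'I_r -> nat) (g : forall i, 'I_(m i) -> Y -> R) :
  bs_lin_indep x -> (forall i j, scalar (g i j)) -> (forall i, bs_lin_indep (g i)) ->
  forall c : {i : 'I_r & 'I_(m i)} -> R,
  \sum_p c p *: eval_at (x (tag p)) (g (tag p) (tagged p)) = 0 -> forall p, c p = 0.
Proof.
move=> xind gscalar gind c sum0.
pose G i y := \sum_(j < m i) c (Tagged (fun i => 'I_(m i)) j) * g i j y.
have Gx y phi : scalar phi -> (forall u, `|phi u| <= `|u|) ->
    \sum_(i < r) G i y * phi (x i) = 0.
  move=> philin phib.
  have : (\sum_p c p *: eval_at (x (tag p)) (g (tag p) (tagged p))) (rank_one phi y) = 0.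
    by rewrite sum0.
  rewrite fct_sumE => sum0y; apply: etrans sum0y.
  transitivity (\sum_(i < r) \sum_(j < m i)
      c (Tagged (fun i => 'I_(m i)) j) * (phi (x i) * g i j y)).
    apply: eq_bigr => i _; rewrite mulr_suml.
    by apply: eq_bigr => j _; rewrite mulrAC -mulrA.
  rewrite (sig_big_dep xpredT (fun _ _ => true)
    (fun i j => c (Tagged (fun i => 'I_(m i)) j) * (phi (x i) * g i j y))).
  apply: eq_bigr => -[i j] _.
  by rewrite /= -(eval_at_rank_one _ _ (gscalar i j) philin phib).
have G0 y i : G i y = 0.
  apply: (xind (G^~ y)); apply/eqP/negPn/negP => v0.
  have [phi [philin phib phiv]] := hahn_banach_norming v0.
  move/eqP: (Gx y phi philin phib); rewrite -scalar_fun_sum // phiv normr_eq0.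
  exact/negP.
move=> [i j]; apply: (gind i (fun j => c (Tagged _ j))).
by apply/funext => y; rewrite fct_sumE; exact: G0.
Qed.

End Operators.

Theorem mainTheorem3 (R : realType) (X Y : completeNormedModType R)
  (T : X -> Y) (r : nat) (x : 'I_r -> X) (m : 'I_r -> nat) :
  bs_reflexive X ->
  bs_Lop T -> bs_opnorm T = 1 ->
  bs_M_ideal (@bs_Lop R X Y) bs_opnorm (@bs_Kop R X Y) ->
  bs_dist_to bs_opnorm T (@bs_Kop R X Y) < 1 ->
  (forall i, (bs_MT T `&` bs_ext (bs_closed_unit_ball X)) (x i)) ->
  bs_lin_indep x ->
  (forall y, (bs_MT T `&` bs_ext (bs_closed_unit_ball X)) y -> ~ bs_lin_indep (bs_extend x y)) ->
  (forall i, bs_k_smooth [set: Y] (fun v : Y => `|v|) (T (x i)) (m i)) ->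
  bs_dim_span_ge (bs_Jset (@bs_Lop R X Y) bs_opnorm T) (\sum_(i < r) m i)%N.
Proof.
move=> _ TL Tn _ _ xMT xind _ smooth.
have xn i : `|x i| = 1 by have [[]] := xMT i.
have gex i : bs_dim_span_ge (bs_Jset [set: Y] (fun v : Y => `|v|) (T (x i))) (m i).
  by have [_ [_ []]] := smooth i.
pose g i := projT1 (cid (gex i)).
have gspan i j : bs_span (bs_Jset [set: Y] (fun v : Y => `|v|) (T (x i))) (g i j).
  by rewrite /g; case: cid => ? [].
have gind i : bs_lin_indep (g i) by rewrite /g; case: cid => ? [].
have gscalar i j : scalar (g i j).
  by apply: bs_span_scalar (gspan i j) => h [[hlin _] _] a u v; exact: hlin.
rewrite -card_tagged_ord.
apply: (bs_dim_span_ge_fintype (u := fun p => eval_at (x (tag p)) (g (tag p) (tagged p)))).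
  by move=> [i j]; apply: eval_at_span (gspan i j) => h; exact: eval_at_Jset.
exact: eval_at_indep.
Qed.
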